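(* Let $X \subset \mathbb{Z}^2$ and let $V_1,\dots,V_n \subset X$ be thick convex digital disks. Let $X'=\bigcup_{i=1}^n V_i$. For each $i$ let $C_i$ be a bounding curve of $V_i$, let $A_{1,i}$ be the set of endpoints of maximal horizontal or maximal vertical line segments contained in $C_i$, and let $A_{2,i}$ be the union of the maximal slanted line segments contained in $C_i$. Then $$A=(X\setminus X')\cup\bigcup_{i=1}^n (A_{1,i}\cup A_{2,i})$$ is a freezing set for $(X,c_1)$.
   Context: Adjacencies: for $x\neq y$ in $\mathbb{Z}^2$, $x,y$ are $c_1$-adjacent if they differ by 1 in exactly one coordinate and agree in the other; $c_2$-adjacent if each coordinate differs by at most 1. Write $x\leftrightarrow_\kappa y$ for $\kappa$-adjacency. A $\kappa$-path is a finite sequence of points with consecutive points equal or $\kappa$-adjacent. A function $f:(X,\kappa)\to(X,\kappa)$ is $\kappa$-continuous ($f\in C(X,\kappa)$) if $x\leftrightarrow_\kappa x'$ implies $f(x)=f(x')$ or $f(x)\leftrightarrow_\kappa f(x')$. $\mathrm{Fix}(f)=\{x: f(x)=x\}$. A set $A\subset X$ is a freezing set for $(X,\kappa)$ if every $f\in C(X,\kappa)$ with $A\subset \mathrm{Fix}(f)$ satisfies $f=\mathrm{id}_X$; it is minimal if no proper subset of $A$ is a freezing set. A (digital) line segment is a $c_2$-connected set of collinear points of $\mathbb{Z}^2$; it is necessarily horizontal, vertical, or of slope $\pm1$ (called slanted). A $c_2$-closed curve is a $c_2$-path $s_0,\dots,s_{m-1}$ with $s_0=s_{m-1}$ and $s_i\ne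 s_j$ for $0<|i-j|<m-1$. If $S$ is a $c_2$-closed curve such that $\mathbb{Z}^2\setminus S$ has exactly two $c_1$-components, one finite and one infinite, the union $D$ of $S$ and the finite component is a digital disk, $S$ is a bounding curve of $D$, and the finite component is the interior $Int(S)$ (also written $Int(X)$). $Bd_2(X)=\{x\in X : \exists y\in\mathbb{Z}^2\setminus X,\ y\leftrightarrow_{c_2}x\}$. A digital disk $X$ is thick if for some bounding curve $S$ of $X$: (i) for every slanted segment $T$ of $Bd_2(X)$ and every non-endpoint $p\in T$ there is $c\in X$ with $c\leftrightarrow_{c_2}p$ but $c$ not $c_1$-adjacent to $p$ (i.e. $c$ is diagonally adjacent to $p$) on the interior side; (ii) if $p$ is the vertex of a $90^\circ$ interior angle $\theta$ of $S$, there is $q\in Int(X)$ such that, if $\theta$ has horizontal and vertical sides, $q\leftrightarrow_{c_2}p$ and $q$ is not $c_1$-adjacent to $p$, and if $\theta$ has slanted sides, $q\leftrightarrow_{c_1}p$; (iii) if $p$ is the vertex of a $135^\circ$ interior angle $\theta$ of $S$, there are $b,b'\in X$ in the interior of $\theta$ with $b\leftrightarrow_{c_2}p$, $b$ not $c_1$-adjacent to $p$, and $b'\leftrightarrow_{c_1}p$. A set $X\subset\mathbb{Z}^2$ is (digitally) convex if $X$ equals the set of integer points of its Euclidean convex hull. *)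

From Stdlib Require Import ZArith Reals List Lia Lra.
Import ListNotations.

Definition pt : Type := (Z * Z)%type.

Definition padd (p q : pt) : pt := (fst p + fst q, snd p + snd q)%Z.
Definition psub (p q : pt) : pt := (fst p - fst q, snd p - snd q)%Z.
Definition pscale (t : Z) (p : pt) : pt := (t * fst p, t * snd p)%Z.

Definition c1adj (x y : pt) : Prop :=
  (Z.abs (fst x - fst y) + Z.abs (snd x - snd y) = 1)%Z.
Definition c2adj (x y : pt) : Prop :=
  x <> y /\ (Z.abs (fst x - fst y) <= 1)%Z /\ (Z.abs (snd x - snd y) <= 1)%Z.
Definition diagadj (x y : pt) : Prop := c2adj x y /\ ~ c1adj x y.

Definition dcontinuous (X : pt -> Prop) (k : pt -> pt -> Prop) (f : pt -> pt) : Prop :=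
  (forall x, X x -> X (f x)) /\
  (forall x y, X x -> X y -> k x y -> f x = f y \/ k (f x) (f y)).

Definition freezing_set (X : pt -> Prop) (k : pt -> pt -> Prop) (A : pt -> Prop) : Prop :=
  (forall a, A a -> X a) /\
  forall f, dcontinuous X k f -> (forall a, A a -> f a = a) -> forall x, X x -> f x = x.

Inductive kpath (k : pt -> pt -> Prop) (Y : pt -> Prop) : pt -> pt -> Prop :=
| kpath_refl x : Y x -> kpath k Y x x
| kpath_step x y z : Y x -> (x = y \/ k x y) -> kpath k Y y z -> kpath k Y x z.

Definition finite_set (P : pt -> Prop) : Prop := exists l : list pt, forall p, P p -> In p l.

Definition nthp (s : list pt) (i : nat) : pt := nth i s (0%Z, 0%Z).

Definition closed_curve (s : list pt) : Prop :=
  let m := length s in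
  (1 <= m)%nat /\
  nthp s 0 = nthp s (m - 1) /\
  (forall i, (S i < m)%nat -> nthp s i = nthp s (S i) \/ c2adj (nthp s i) (nthp s (S i))) /\
  (forall i j, (i < j)%nat -> (j < m)%nat -> (j - i < m - 1)%nat -> nthp s i <> nthp s j).

Definition curve_pts (s : list pt) (p : pt) : Prop := In p s.
Definition compl_curve (s : list pt) (p : pt) : Prop := ~ In p s.

(* Z^2 \ S has exactly two c1-components: the one of a (finite) and of b (infinite) *)
Definition two_components (s : list pt) (a b : pt) : Prop :=
  compl_curve s a /\ compl_curve s b /\
  ~ kpath c1adj (compl_curve s) a b /\
  (forall y, compl_curve s y -> kpath c1adj (compl_curve s) a y \/ kpath c1adj (compl_curve s) b y) /\
  finite_set (kpath c1adj (compl_curve s) a) /\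
  ~ finite_set (kpath c1adj (compl_curve s) b).

Definition interior (s : list pt) (p : pt) : Prop :=
  exists a b, two_components s a b /\ kpath c1adj (compl_curve s) a p.

Definition bounding_curve (D : pt -> Prop) (s : list pt) : Prop :=
  closed_curve s /\
  exists a b, two_components s a b /\
    forall p, D p <-> (curve_pts s p \/ kpath c1adj (compl_curve s) a p).

Definition digital_disk (D : pt -> Prop) : Prop := exists s, bounding_curve D s.

Definition Bd2 (X : pt -> Prop) (x : pt) : Prop := X x /\ exists y, ~ X y /\ c2adj y x.

Definition hv_dir (d : pt) : Prop := d = (1%Z, 0%Z) \/ d = (0%Z, 1%Z).
Definition slanted_dir (d : pt) : Prop := d = (1%Z, 1%Z) \/ d = (1%Z, (-1)%Z).

Definition seg_in (Y : pt -> Prop) (p d : pt) (k : Z) : Prop :=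
  (1 <= k)%Z /\ forall t, (0 <= t <= k)%Z -> Y (padd p (pscale t d)).

Definition maximal_seg_in (Y : pt -> Prop) (p d : pt) (k : Z) : Prop :=
  seg_in Y p d k /\ ~ Y (psub p d) /\ ~ Y (padd p (pscale (k + 1) d)).

Definition A1set (s : list pt) (q : pt) : Prop :=
  exists p d k, hv_dir d /\ maximal_seg_in (curve_pts s) p d k /\
    (q = p \/ q = padd p (pscale k d)).

Definition A2set (s : list pt) (q : pt) : Prop :=
  exists p d k, slanted_dir d /\ maximal_seg_in (curve_pts s) p d k /\
    exists t, (0 <= t <= k)%Z /\ q = padd p (pscale t d).

(** Directions in units of 45 degrees, counterclockwise from (1,0) *)
Definition unitv (z : Z) : pt :=
  let r := Z.modulo z 8 in
  if Z.eqb r 0 then (1, 0)%Z else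
  if Z.eqb r 1 then (1, 1)%Z else
  if Z.eqb r 2 then (0, 1)%Z else
  if Z.eqb r 3 then ((-1), 1)%Z else
  if Z.eqb r 4 then ((-1), 0)%Z else
  if Z.eqb r 5 then ((-1), (-1))%Z else
  if Z.eqb r 6 then (0, (-1))%Z else (1, (-1))%Z.

(** Vertices of the closed curve: indices j < m-1, cyclic neighbours *)
Definition ncurve (s : list pt) : nat := (length s - 1)%nat.
Definition cnext (s : list pt) (j : nat) : pt := nthp s (S j).
Definition cprev (s : list pt) (j : nat) : pt :=
  if Nat.eqb j 0 then nthp s (ncurve s - 1) else nthp s (j - 1).

Definition cross (p q : pt) : Z := (fst p * snd q - snd p * fst q)%Z.
(* twice the signed (shoelace) area of the closed polygon *)
Definition signed_area2 (s : list pt) : Z :=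
  fold_right (fun i acc => (cross (nthp s i) (nthp s (S i)) + acc)%Z) 0%Z (seq 0 (ncurve s)).
(* +1 if counterclockwise (interior on the left), -1 otherwise *)
Definition orient (s : list pt) : Z := if Z.ltb 0 (signed_area2 s) then 1%Z else (-1)%Z.

(* At vertex j, with outgoing side direction db, the interior angle is
   k*45 degrees (1 <= k <= 7): the incoming side direction is obtained by
   rotating db by k*45 degrees towards the interior. *)
Definition interior_angle (s : list pt) (j : nat) (db k : Z) : Prop :=
  (1 <= k <= 7)%Z /\
  psub (cnext s j) (nthp s j) = unitv db /\
  psub (cprev s j) (nthp s j) = unitv (db + orient s * k).

Definition in_angle_dir (s : list pt) (db k u : Z) (e : pt) : Prop :=
  (0 < u < k)%Z /\ e = unitv (db + orient s * u).

Definition thick_cond_i (D : pt -> Prop) : Prop :=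
  forall p0 d k t, slanted_dir d -> seg_in (Bd2 D) p0 d k -> (0 < t < k)%Z ->
    let p := padd p0 (pscale t d) in
    exists c, D c /\ diagadj c p /\ c <> padd p d /\ c <> psub p d.

Definition thick_cond_ii (s : list pt) : Prop :=
  forall j db, (j < ncurve s)%nat -> interior_angle s j db 2 ->
    let p := nthp s j in
    if Z.even db
    then exists q, interior s q /\ diagadj q p
    else exists q, interior s q /\ c1adj q p.

Definition thick_cond_iii (D : pt -> Prop) (s : list pt) : Prop :=
  forall j db, (j < ncurve s)%nat -> interior_angle s j db 3 ->
    let p := nthp s j in
    exists b b' u u', D b /\ D b' /\
      in_angle_dir s db 3 u (psub b p) /\ diagadj b p /\
      in_angle_dir s db 3 u' (psub b' p) /\ c1adj b' p.

Definition thick (D : pt -> Prop) : Prop :=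
  digital_disk D /\
  exists s, bounding_curve D s /\ thick_cond_i D /\ thick_cond_ii s /\ thick_cond_iii D s.

(** Digital convexity: X = integer points of its Euclidean convex hull *)
Definition in_convex_hull (X : pt -> Prop) (p : pt) : Prop :=
  exists l : list (R * pt),
    Forall (fun rq => (0 <= fst rq)%R /\ X (snd rq)) l /\
    fold_right (fun rq acc => (fst rq + acc)%R) 0%R l = 1%R /\
    fold_right (fun rq acc => (fst rq * IZR (fst (snd rq)) + acc)%R) 0%R l = IZR (fst p) /\
    fold_right (fun rq acc => (fst rq * IZR (snd (snd rq)) + acc)%R) 0%R l = IZR (snd p).

Definition digitally_convex (X : pt -> Prop) : Prop :=
  forall p, X p <-> in_convex_hull X p.

(* Let f be a c1-continuous self-map of X fixing A. Points of X outside the disks V_i are in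
   A, so it suffices to show that f fixes each disk V_i pointwise. The argument uses only
   that V_i is a digital disk with bounding curve C_i contained in X.

   1. c1-continuity makes f 1-Lipschitz for the l1 distance along horizontal and vertical
      runs in X, so such a run whose two ends are fixed is fixed pointwise
      ([hv_run_fixed]).
   2. Every point of a separating closed curve has a c2-neighbour on the curve, hence lies
      on a maximal line segment of the curve ([curve_point_on_maximal_segment]). Slanted
      maximal segments lie in A_2; horizontal and vertical ones have their endpoints in
      A_1 and are fixed by step 1. So the curve is fixed ([curve_fixed]).
   3. The maximal horizontal run through a point of a disk is finite and both of its ends
      lie on the bounding curve, so step 1 fixes it ([disk_fixed]). *)

From Stdlib Require Import ZArith List Lia Classical.

Local Open Scope Z_scope.

Definition dist1 (p q : pt) : Z := Z.abs (fst p - fst q) + Z.abs (snd p - snd q).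

Lemma dist1_triangle (p q r : pt) : dist1 p r <= dist1 p q + dist1 q r.
Proof. unfold dist1; lia. Qed.

Lemma list_dist1_bounded (l : list pt) (p : pt) :
  exists B, forall q, In q l -> dist1 q p <= B.
Proof.
  induction l as [|a l [B HB]].
  - exists 0; intros q [].
  - exists (Z.max (dist1 a p) B); intros q [<-|Hq]; [lia|].
    specialize (HB q Hq); lia.
Qed.

Definition line_dir (d : pt) : Prop := hv_dir d \/ slanted_dir d.

Lemma finite_line_bounded (Y : pt -> Prop) (p d : pt) :
  finite_set Y -> line_dir d ->
  exists B, forall t, Y (padd p (pscale t d)) -> Z.abs t <= B.
Proof.
  intros [l Hl] Hd. destruct (list_dist1_bounded l p) as [B HB].
  exists B; intros t Ht. specialize (HB _ (Hl _ Ht)).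
  destruct p as [p1 p2].
  destruct Hd as [[-> | ->] | [-> | ->]]; unfold dist1, padd, pscale in HB; simpl in HB; lia.
Qed.

Lemma longest_run (P : Z -> Prop) (B : Z) :
  P 0 -> (forall t, P t -> t <= B) ->
  exists hi, 0 <= hi /\ (forall t, 0 <= t <= hi -> P t) /\ ~ P (hi + 1).
Proof.
  intros P0 HB. apply NNPP; intro Hno.
  assert (Hall : forall N : nat, forall t, 0 <= t <= Z.of_nat N -> P t).
  { induction N as [|N IH]; intros t Ht.
    - replace t with 0 by lia; exact P0.
    - destruct (Z.eq_dec t (Z.of_nat N + 1)) as [->|Hne]; [|apply IH; lia].
      apply NNPP; intro HnP. apply Hno. exists (Z.of_nat N).
      split; [lia|]. split; [exact IH|exact HnP]. }
  specialize (HB _ (Hall (Z.to_nat (Z.max 0 B + 1)) (Z.max 0 B + 1) ltac:(lia))). lia.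
Qed.

Lemma line_origin (p d : pt) : padd p (pscale 0 d) = p.
Proof. destruct p, d; unfold padd, pscale; simpl; f_equal; lia. Qed.

Lemma maximal_run (Y : pt -> Prop) (p d : pt) (B : Z) :
  (forall t, Y (padd p (pscale t d)) -> Z.abs t <= B) -> Y p ->
  exists lo hi, lo <= 0 <= hi /\ (forall t, lo <= t <= hi -> Y (padd p (pscale t d))) /\
    ~ Y (padd p (pscale (lo - 1) d)) /\ ~ Y (padd p (pscale (hi + 1) d)).
Proof.
  intros HB Hp.
  assert (Hp0 : forall s, s = 0 -> Y (padd p (pscale s d))).
  { intros s ->. rewrite line_origin; exact Hp. }
  destruct (longest_run (fun t => Y (padd p (pscale t d))) B) as [hi [H1 [H2 H3]]];
    [apply Hp0; reflexivity | intros t Ht; specialize (HB t Ht); lia |].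
  destruct (longest_run (fun t => Y (padd p (pscale (- t) d))) B) as [lo [L1 [L2 L3]]];
    [apply Hp0; reflexivity | intros t Ht; specialize (HB _ Ht); lia |].
  exists (- lo), hi. split; [lia|]. split; [|split; [|exact H3]].
  - intros t Ht. destruct (Z_le_dec 0 t); [apply H2; lia|].
    replace t with (- (- t)) by lia. apply L2; lia.
  - replace (- lo - 1) with (- (lo + 1)) by lia. exact L3.
Qed.
Lemma continuous_step (X : pt -> Prop) (f : pt -> pt) (x y : pt) :
  dcontinuous X c1adj f -> X x -> X y -> c1adj x y -> dist1 (f x) (f y) <= 1.
Proof.
  intros [_ Hc] Hx Hy Hxy. unfold dist1.
  destruct (Hc x y Hx Hy Hxy) as [E|E]; [rewrite E; lia | unfold c1adj in E; lia].
Qed.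

Lemma hv_line_adj (p d : pt) (t : Z) :
  hv_dir d -> c1adj (padd p (pscale (t + 1) d)) (padd p (pscale t d)).
Proof. intros [-> | ->]; unfold c1adj, padd, pscale; simpl; lia. Qed.

Lemma hv_line_lipschitz (X : pt -> Prop) (f : pt -> pt) (p d : pt) :
  dcontinuous X c1adj f -> hv_dir d ->
  forall (n : nat) (t : Z), (forall u, t <= u <= t + Z.of_nat n -> X (padd p (pscale u d))) ->
  dist1 (f (padd p (pscale (t + Z.of_nat n) d))) (f (padd p (pscale t d))) <= Z.of_nat n.
Proof.
  intros Hf Hd n t. induction n as [|n IH]; intros HX.
  - rewrite Z.add_0_r. unfold dist1; lia.
  - replace (t + Z.of_nat (S n)) with ((t + Z.of_nat n) + 1) by lia.
    pose proof (IH (fun u Hu => HX u ltac:(lia))) as Hrest.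
    pose proof (continuous_step X f _ _ Hf (HX (t + Z.of_nat n + 1) ltac:(lia))
      (HX (t + Z.of_nat n) ltac:(lia)) (hv_line_adj p d _ Hd)) as Hlast.
    pose proof (dist1_triangle (f (padd p (pscale (t + Z.of_nat n + 1) d)))
      (f (padd p (pscale (t + Z.of_nat n) d))) (f (padd p (pscale t d)))). lia.
Qed.

(* A horizontal or vertical run in X whose two ends are fixed by f is fixed pointwise:
   the image of an inner point is within l1 distance t - lo of one end and hi - t of the
   other, and the only such point is the inner point itself. *)
Lemma hv_run_fixed (X : pt -> Prop) (f : pt -> pt) (p d : pt) (lo hi : Z) :
  dcontinuous X c1adj f -> hv_dir d ->
  (forall u, lo <= u <= hi -> X (padd p (pscale u d))) ->
  f (padd p (pscale lo d)) = padd p (pscale lo d) ->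
  f (padd p (pscale hi d)) = padd p (pscale hi d) ->
  forall t, lo <= t <= hi -> f (padd p (pscale t d)) = padd p (pscale t d).
Proof.
  intros Hf Hd HX Elo Ehi t Ht.
  pose proof (hv_line_lipschitz X f p d Hf Hd (Z.to_nat (t - lo)) lo) as Dlo.
  pose proof (hv_line_lipschitz X f p d Hf Hd (Z.to_nat (hi - t)) t) as Dhi.
  rewrite Z2Nat.id in Dlo, Dhi by lia.
  replace (lo + (t - lo)) with t in Dlo by lia. replace (t + (hi - t)) with hi in Dhi by lia.
  specialize (Dlo (fun u Hu => HX u ltac:(lia))). specialize (Dhi (fun u Hu => HX u ltac:(lia))).
  rewrite Elo in Dlo. rewrite Ehi in Dhi.
  destruct (f (padd p (pscale t d))) as [y1 y2], p as [p1 p2].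
  destruct Hd as [-> | ->]; unfold dist1, padd, pscale in *; simpl in *; f_equal; lia.
Qed.
Lemma line_shift (p d : pt) (a b : Z) :
  padd (padd p (pscale a d)) (pscale b d) = padd p (pscale (a + b) d).
Proof. destruct p, d; unfold padd, pscale; simpl; f_equal; lia. Qed.

Lemma line_back (p d : pt) (a : Z) : psub (padd p (pscale a d)) d = padd p (pscale (a - 1) d).
Proof. destruct p, d; unfold padd, psub, pscale; simpl; f_equal; lia. Qed.

Lemma run_is_maximal_segment (Y : pt -> Prop) (p d : pt) (lo hi : Z) :
  (forall t, lo <= t <= hi -> Y (padd p (pscale t d))) ->
  ~ Y (padd p (pscale (lo - 1) d)) -> ~ Y (padd p (pscale (hi + 1) d)) -> 1 <= hi - lo ->
  maximal_seg_in Y (padd p (pscale lo d)) d (hi - lo).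
Proof.
  intros Hrun Hlo Hhi Hlen. split; [split; [exact Hlen|] | split].
  - intros t Ht. rewrite line_shift. apply Hrun; lia.
  - rewrite line_back. exact Hlo.
  - rewrite line_shift. replace (lo + (hi - lo + 1)) with (hi + 1) by lia. exact Hhi.
Qed.

Lemma kpath_snoc (k : pt -> pt -> Prop) (Y : pt -> Prop) (x y z : pt) :
  kpath k Y x y -> Y z -> (y = z \/ k y z) -> kpath k Y x z.
Proof.
  induction 1 as [x Hx | x y' z' Hx Hxy _ IH]; intros Hz Hstep.
  - apply kpath_step with z; [exact Hx | exact Hstep | apply kpath_refl; exact Hz].
  - apply kpath_step with y'; [exact Hx | exact Hxy | exact (IH Hz Hstep)].
Qed.

Lemma ray_in_component (s : list pt) (a : pt) (sg : Z) :
  (sg = 1 \/ sg = -1) ->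
  (forall t, 0 <= t -> ~ In (padd a (pscale (sg * t) (1, 0))) s) ->
  forall n : nat, kpath c1adj (compl_curve s) a (padd a (pscale (sg * Z.of_nat n) (1, 0))).
Proof.
  intros Hsg Hray n. induction n as [|n IH].
  - rewrite Z.mul_0_r, line_origin. apply kpath_refl.
    intro Ha. apply (Hray 0 ltac:(lia)). rewrite Z.mul_0_r, line_origin. exact Ha.
  - apply kpath_snoc with (1 := IH); [apply Hray; lia|].
    right. destruct a; unfold c1adj, padd, pscale; simpl.
    destruct Hsg as [-> | ->]; lia.
Qed.

(* A set with at most one point does not separate the plane: one of the two horizontal rays
   from a avoids it, so the c1-component of a would be infinite. *)
Lemma point_does_not_separate (s : list pt) (p a b : pt) :
  (forall q, In q s -> q = p) -> ~ two_components s a b.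
Proof.
  intros Hs (Ha & _ & _ & _ & Hfin & _).
  assert (Hsg : exists sg, (sg = 1 \/ sg = -1) /\
            forall t, 0 <= t -> ~ In (padd a (pscale (sg * t) (1, 0))) s).
  { destruct (classic (exists t, 0 <= t /\ In (padd a (pscale t (1, 0))) s))
      as [[t1 [Ht1 Hin1]] | Hnone].
    - exists (-1). split; [right; reflexivity|]. intros t Ht Hin.
      pose proof (Hs _ Hin1) as E1. pose proof (Hs _ Hin) as E. rewrite <- E1 in E.
      apply (f_equal fst) in E. unfold padd, pscale in E. cbn [fst snd] in E.
      assert (t1 = 0) by lia. subst t1. apply Ha. rewrite line_origin in Hin1. exact Hin1.
    - exists 1. split; [left; reflexivity|]. intros t Ht Hin. apply Hnone.
      exists t. split; [exact Ht|]. rewrite Z.mul_1_l in Hin. exact Hin. }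
  destruct Hsg as [sg [Hsg Hray]].
  destruct (finite_line_bounded _ a (1, 0) Hfin ltac:(left; left; reflexivity)) as [B HB].
  pose proof (HB _ (ray_in_component s a sg Hsg Hray (Z.to_nat (Z.max 0 B + 1)))).
  destruct Hsg as [-> | ->]; lia.
Qed.

Lemma c2adj_line_step (p q : pt) :
  c2adj p q -> exists d t, line_dir d /\ (t = 1 \/ t = -1) /\ q = padd p (pscale t d).
Proof.
  destruct p as [p1 p2], q as [q1 q2]; unfold c2adj; cbn [fst snd]; intros [Hne [H1 H2]].
  unfold line_dir, hv_dir, slanted_dir, padd, pscale; cbn [fst snd].
  destruct (Z.eq_dec q1 p1) as [E1|E1].
  - assert (E2 : q2 <> p2) by (intro; subst; congruence).
    exists (0, 1), (q2 - p2). cbn [fst snd].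
    split; [left; right; reflexivity | split; [lia | f_equal; lia]].
  - assert (Hx : q1 - p1 = -1 \/ q1 - p1 = 1) by lia.
    assert (Hy : q2 - p2 = -1 \/ q2 - p2 = 0 \/ q2 - p2 = 1) by lia.
    exists (1, (q1 - p1) * (q2 - p2)), (q1 - p1). cbn [fst snd].
    split; [|split; [lia|]].
    + destruct Hy as [-> | [-> | ->]]; destruct Hx as [-> | ->]; cbn; tauto.
    + f_equal; destruct Hx as [Hx | Hx]; rewrite Hx; lia.
Qed.
(* Every point of a separating closed curve has a c2-neighbour on the curve: for curves of
   at least three entries the successor index works, and shorter curves consist of a single
   point, which cannot separate. *)
Lemma closed_curve_c2_neighbor (s : list pt) (a b p : pt) :
  closed_curve s -> two_components s a b -> In p s -> exists q, In q s /\ c2adj p q.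
Proof.
  intros (Hm & Hclose & Hstep & Hsimple) Htc Hp.
  destruct (In_nth s p (0, 0) Hp) as [i [Hi Ei]].
  destruct (Nat.le_gt_cases 3 (length s)) as [Hlen | Hlen].
  - set (j := if Nat.eqb i (length s - 1) then 0%nat else i).
    assert (Ej : nthp s j = p).
    { unfold j; destruct (Nat.eqb_spec i (length s - 1)) as [->|_]; [rewrite Hclose|]; exact Ei. }
    assert (Hj : (S j < length s)%nat) by (unfold j; destruct (Nat.eqb_spec i (length s - 1)); lia).
    exists (nthp s (S j)). split; [exact (nth_In s (0, 0) Hj)|].
    destruct (Hstep j Hj) as [E | E]; [|rewrite <- Ej; exact E].
    exfalso. exact (Hsimple j (S j) ltac:(lia) Hj ltac:(lia) E).
  - exfalso. apply (point_does_not_separate s p a b); [|exact Htc].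
    destruct s as [|x [|y [|z r]]]; cbn in Hm, Hlen; try lia.
    + intros q [<-|[]]. destruct Hp as [<-|[]]; reflexivity.
    + unfold nthp in Hclose; cbn in Hclose; subst y.
      intros q [<-|[<-|[]]]; destruct Hp as [<-|[<-|[]]]; reflexivity.
Qed.

Lemma curve_point_on_maximal_segment (s : list pt) (a b p : pt) :
  closed_curve s -> two_components s a b -> In p s ->
  exists p0 d k t, line_dir d /\ maximal_seg_in (curve_pts s) p0 d k /\
    0 <= t <= k /\ p = padd p0 (pscale t d).
Proof.
  intros Hcl Htc Hp.
  destruct (closed_curve_c2_neighbor s a b p Hcl Htc Hp) as [q [Hq Hpq]].
  destruct (c2adj_line_step p q Hpq) as [d [e [Hd [He ->]]]].
  destruct (finite_line_bounded (curve_pts s) p d ltac:(exists s; tauto) Hd) as [B HB].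
  destruct (maximal_run (curve_pts s) p d B HB Hp) as [lo [hi [Hlohi [Hrun [Hlo Hhi]]]]].
  assert (Hlen : 1 <= hi - lo).
  { destruct He as [-> | ->].
    - destruct (Z_le_dec 1 hi); [lia|]. exfalso. apply Hhi. now replace (hi + 1) with 1 by lia.
    - destruct (Z_le_dec lo (-1)); [lia|]. exfalso. apply Hlo. now replace (lo - 1) with (-1) by lia. }
  exists (padd p (pscale lo d)), d, (hi - lo), (- lo). split; [exact Hd|].
  split; [exact (run_is_maximal_segment _ p d lo hi Hrun Hlo Hhi Hlen)|].
  split; [lia|]. rewrite line_shift, Z.add_opp_diag_r, line_origin. reflexivity.
Qed.

Lemma A1set_on_curve (s : list pt) (q : pt) : A1set s q -> In q s.
Proof.
  intros (p0 & d & k & _ & ((Hk & Hseg) & _) & [-> | ->]).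
  - rewrite <- (line_origin p0 d). apply Hseg. lia.
  - apply Hseg. lia.
Qed.

Lemma A2set_on_curve (s : list pt) (q : pt) : A2set s q -> In q s.
Proof. intros (p0 & d & k & _ & ((_ & Hseg) & _) & t & Ht & ->). apply Hseg. exact Ht. Qed.

(* A digital disk is finite: it is the union of its curve and a finite component. *)
Lemma disk_finite (D : pt -> Prop) (s : list pt) : bounding_curve D s -> finite_set D.
Proof.
  intros [_ (a & b & (_ & _ & _ & _ & [l Hl] & _) & HD)].
  exists (s ++ l). intros p Hp. apply in_or_app.
  apply HD in Hp. destruct Hp as [Hp | Hp]; [left; exact Hp | right; exact (Hl _ Hp)].
Qed.

(* A disk point with a c1-neighbour outside the disk lies on the bounding curve, since
   an interior point's off-curve c1-neighbours are interior as well. *)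
Lemma disk_edge_on_curve (D : pt -> Prop) (s : list pt) (q r : pt) :
  bounding_curve D s -> D q -> ~ D r -> c1adj q r -> In q s.
Proof.
  intros [_ (a & b & _ & HD)] Hq Hr Hqr.
  apply HD in Hq. destruct Hq as [Hq | Hq]; [exact Hq|].
  exfalso. apply Hr, HD. destruct (classic (In r s)) as [Hrs | Hrs]; [left; exact Hrs | right].
  exact (kpath_snoc _ _ _ _ _ Hq Hrs (or_intror Hqr)).
Qed.

Section FixedDisk.

Variables (X : pt -> Prop) (f : pt -> pt).
Hypothesis f_cont : dcontinuous X c1adj f.

(* If f fixes A_1 and A_2 of a separating closed curve in X, it fixes the whole curve:
   slanted maximal segments are contained in A_2, and horizontal or vertical ones have their
   endpoints in A_1, hence are fixed by [hv_run_fixed]. *)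
Lemma curve_fixed (s : list pt) (a b : pt) :
  closed_curve s -> two_components s a b -> (forall q, In q s -> X q) ->
  (forall q, A1set s q \/ A2set s q -> f q = q) -> forall p, In p s -> f p = p.
Proof.
  intros Hcl Htc HsX HA p Hp.
  destruct (curve_point_on_maximal_segment s a b p Hcl Htc Hp)
    as (p0 & d & k & t & [Hhv | Hsl] & Hmax & Ht & ->).
  - assert (Hend : forall u, u = 0 \/ u = k -> f (padd p0 (pscale u d)) = padd p0 (pscale u d)).
    { intros u Hu. apply HA. left. exists p0, d, k. split; [exact Hhv|]. split; [exact Hmax|].
      destruct Hu as [-> | ->]; [left; apply line_origin | right; reflexivity]. }
    destruct Hmax as [[_ Hseg] _].
    apply (hv_run_fixed X f p0 d 0 k f_cont Hhv); auto.
    intros u Hu. apply HsX, Hseg, Hu.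
  - apply HA. right. exists p0, d, k. split; [exact Hsl|]. split; [exact Hmax|]. exists t. auto.
Qed.

(* A disk in X whose A_1 and A_2 are fixed by f is fixed pointwise: the maximal horizontal
   run through a disk point ends on the curve, which is fixed by [curve_fixed]. *)
Lemma disk_fixed (D : pt -> Prop) (s : list pt) :
  bounding_curve D s -> (forall p, D p -> X p) ->
  (forall q, A1set s q \/ A2set s q -> f q = q) -> forall x, D x -> f x = x.
Proof.
  intros HDs HDX HA x Hx.
  pose proof HDs as [Hcl (a & b & Htc & HD)].
  assert (Hcurve : forall p, In p s -> f p = p).
  { apply (curve_fixed s a b Hcl Htc); [|exact HA].
    intros q Hq. apply HDX, HD. left. exact Hq. }
  destruct (finite_line_bounded D x (1, 0) (disk_finite D s HDs) ltac:(left; left; reflexivity))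
    as [B HB].
  destruct (maximal_run D x (1, 0) B HB Hx) as [lo [hi [Hlohi [Hrun [Hlo Hhi]]]]].
  rewrite <- (line_origin x (1, 0)).
  apply (hv_run_fixed X f x (1, 0) lo hi f_cont ltac:(left; reflexivity)); [| | | lia].
  - intros u Hu. apply HDX, Hrun, Hu.
  - apply Hcurve, (disk_edge_on_curve D s _ _ HDs (Hrun lo ltac:(lia)) Hlo).
    destruct x; unfold c1adj, padd, pscale; cbn [fst snd]; lia.
  - apply Hcurve, (disk_edge_on_curve D s _ _ HDs (Hrun hi ltac:(lia)) Hhi).
    destruct x; unfold c1adj, padd, pscale; cbn [fst snd]; lia.
Qed.

End FixedDisk.

Theorem mainTheorem2 (X : pt -> Prop) (n : nat) (V : nat -> pt -> Prop) (C : nat -> list pt) :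
  (forall i, (i < n)%nat ->
     (forall p, V i p -> X p) /\ thick (V i) /\ digitally_convex (V i) /\
     bounding_curve (V i) (C i)) ->
  freezing_set X c1adj
    (fun p => (X p /\ ~ (exists i, (i < n)%nat /\ V i p)) \/
              (exists i, (i < n)%nat /\ (A1set (C i) p \/ A2set (C i) p))).
Proof.
  intros HV. split.
  - intros p [[Hp _] | (i & Hi & HAi)]; [exact Hp|].
    destruct (HV i Hi) as (HVX & _ & _ & _ & a & b & _ & HD).
    apply HVX, HD. left.
    destruct HAi as [H | H]; [apply A1set_on_curve | apply A2set_on_curve]; exact H.
  - intros f Hf HA x Hx.
    destruct (classic (exists i, (i < n)%nat /\ V i x)) as [(i & Hi & Hvx) | Hout].
    + destruct (HV i Hi) as (HVX & _ & _ & HC).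
      apply (disk_fixed X f Hf (V i) (C i) HC HVX); [|exact Hvx].
      intros q Hq. apply HA. right. exists i. auto.
    + apply HA. left. auto.
Qed.
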